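(* Let $D$ be a centrally finite division algebra with center $F$, and let $R=D[t_1,\ldots,t_n]$ be the ring of polynomials in $n$ central commuting variables over $D$. For any polynomial $p\in R$, there exist $p_1,\ldots,p_m\in F[t_1,\ldots,t_n]$ such that $D[p]=D[p_1,\ldots,p_m]$ inside $R$.
   Context: A division algebra is centrally finite if it is finite-dimensional over its center. For a subset $X\subseteq R$, $D[X]$ denotes the subring of $R$ generated by $D\cup X$. *)

From HB Require Import structures.
From mathcomp Require Import all_boot all_order all_algebra.
From mathcomp Require Import mpoly.
Set Implicit Arguments. Unset Strict Implicit. Unset Printing Implicit Defensive.
Import GRing.Theory.
Local Open Scope ring_scope.

Definition is_division_ring (D : unitRingType) : Prop :=
  forall x : D, x != 0 -> x \is a GRing.unit.

Definition central (D : ringType) (x : D) : Prop :=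
  forall y : D, x * y = y * x.

Definition centrally_finite (D : ringType) : Prop :=
  exists b : seq D, forall x : D,
    exists c : seq D, size c = size b /\ (forall i, central (nth 0 c i)) /\
      x = \sum_(i < size b) nth 0 c i * nth 0 b i.

Definition subring_pred (R : ringType) (S : R -> Prop) : Prop :=
  [/\ S 1, (forall x y, S x -> S y -> S (x - y)) & (forall x y, S x -> S y -> S (x * y))].

(* D[X] inside R = D[t_1..t_n]: the subring generated by the constants D
   together with the elements of X (intersection of all such subrings). *)
Definition gen_subring (D : ringType) (n : nat) (X : seq {mpoly D[n]})
    (q : {mpoly D[n]}) : Prop :=
  forall S : {mpoly D[n]} -> Prop,
    subring_pred S -> (forall d : D, S d%:MP) -> (forall x, x \in X -> S x) -> S q.

(* q \in F[t_1..t_n]: all coefficients of q are central in D. *)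
Definition over_center (D : ringType) (n : nat) (q : {mpoly D[n]}) : Prop :=
  forall m : 'X_{1..n}, central q@_m.

From HB Require Import structures.
From mathcomp Require Import all_boot all_order all_algebra.
From mathcomp Require Import mpoly.
From Stdlib Require Import Classical.
Set Implicit Arguments. Unset Strict Implicit. Unset Printing Implicit Defensive.
Import GRing.Theory.
Local Open Scope ring_scope.

(* Let G be a subring of D[t_1..t_n] containing D, and w in G nonzero.
   Scale w so that one of its coefficients is 1.  If some commutator
   d w - w d is nonzero, it lies in G and has strictly smaller support (the
   coefficient 1 commutes with d), so induction on the support yields a
   nonzero q in G with central coefficients and support inside that of w.
   Subtracting a left D-multiple of q kills a coefficient of w; iterating
   writes every element of G as a left D-combination of central-coefficient
   elements of G.  For G = D[p], those appearing in p generate D[p]. *)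

Section SubringPred.
Variables (R : ringType) (S : R -> Prop).
Hypothesis subS : subring_pred S.

Lemma subring_predB x y : S x -> S y -> S (x - y).
Proof. by case: subS => _ SB _; apply: SB. Qed.

Lemma subring_predM x y : S x -> S y -> S (x * y).
Proof. by case: subS => _ _ SM; apply: SM. Qed.

Lemma subring_pred0 : S 0.
Proof. by case: subS => S1 _ _; rewrite -(subrr 1); apply: subring_predB. Qed.

Lemma subring_predD x y : S x -> S y -> S (x + y).
Proof.
move=> Sx Sy; rewrite -[y]opprK -[- y]sub0r.
by apply: subring_predB => //; apply: subring_predB => //; apply: subring_pred0.
Qed.

Lemma subring_pred_sum (I : eqType) (r : seq I) (F : I -> R) :
  (forall i, i \in r -> S (F i)) -> S (\sum_(i <- r) F i).
Proof.
elim: r => [|i r IHr] SF; first by rewrite big_nil; apply: subring_pred0.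
rewrite big_cons; apply: subring_predD; first by apply: SF; rewrite mem_head.
by apply: IHr => j rj; apply: SF; rewrite in_cons rj orbT.
Qed.

End SubringPred.

Section MpolyCoefficients.
Variables (R : ringType) (n : nat).
Implicit Types (p q : {mpoly R[n]}) (c : R).

Lemma mcoeffMC p c m : (p * c%:MP)@_m = p@_m * c.
Proof.
have -> : p * c%:MP = \sum_(k <- msupp p) (p@_k * c) *: 'X_[k].
  rewrite {1}(mpolyE p) mulr_suml; apply: eq_bigr => k _.
  by rewrite -scalerAl -commr_mpolyX mul_mpolyC scalerA.
rewrite [in RHS](mpolyE p) !raddf_sum /= mulr_suml; apply: eq_bigr => k _.
by rewrite !mcoeffZ mcoeffX -mulrA commr_nat mulrA.
Qed.

Lemma mcoeff_commC c p m : (c%:MP * p - p * c%:MP)@_m = c * p@_m - p@_m * c.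
Proof. by rewrite mcoeffB mcoeffCM mcoeffMC. Qed.

Lemma over_centerP p : over_center p <-> forall c, c%:MP * p = p * c%:MP.
Proof.
split=> [cp c | commp m c].
  by apply/mpolyP => m; rewrite mcoeffCM mcoeffMC cp.
by have /(congr1 (mcoeff m)) := commp c; rewrite mcoeffCM mcoeffMC.
Qed.

Lemma exists_mem_msupp p : p != 0 -> exists m, m \in msupp p.
Proof. by rewrite -msupp_eq0; case: (msupp p) => // m s _; exists m; rewrite mem_head. Qed.

Lemma msupp_size_lt p q m :
  {subset msupp q <= msupp p} -> m \in msupp p -> m \notin msupp q ->
  (size (msupp q) < size (msupp p))%N.
Proof.
move=> sqp mp; apply: contraNT; rewrite -leqNgt => le_pq.
by have [_ ->] := uniq_min_size (msupp_uniq q) sqp le_pq.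
Qed.

Lemma msupp_size_ind (P : {mpoly R[n]} -> Prop) :
  (forall p, (forall q, (size (msupp q) < size (msupp p))%N -> P q) -> P p) ->
  forall p, P p.
Proof.
move=> IH p; have [k] := ubnP (size (msupp p)); elim: k p => // k IHk p lepk.
by apply: IH => q ltqp; apply: IHk; apply: leq_trans ltqp _.
Qed.

End MpolyCoefficients.

Section SubringOverDivisionRing.
Variables (D : unitRingType) (n : nat).
Hypothesis divD : is_division_ring D.
Variable G : {mpoly D[n]} -> Prop.
Hypothesis subG : subring_pred G.
Hypothesis GC : forall d : D, G d%:MP.

Let GB := subring_predB subG.
Let GM := subring_predM subG.

Lemma subring_central_elem w : G w -> w != 0 ->
  exists q, [/\ G q, over_center q, q != 0 & {subset msupp q <= msupp w}].
Proof.
elim/msupp_size_ind: w => w IHw Gw w_neq0.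
have [m0 wm0] := exists_mem_msupp w_neq0.
pose w1 := (w@_m0)^-1%:MP * w.
have w1m0 : w1@_m0 = 1 by rewrite mcoeffCM mulVr //; apply: divD; rewrite -mcoeff_msupp.
have sw1w : {subset msupp w1 <= msupp w} by rewrite /w1 mul_mpolyC; apply: msuppZ_le.
have Gw1 : G w1 by apply: GM.
have [cw1|ncw1] := classic (over_center w1).
  exists w1; split=> //; apply: contra_neq (oner_neq0 D) => w1_0.
  by rewrite -w1m0 w1_0 mcoeff0.
have [d] : exists d, d%:MP * w1 - w1 * d%:MP != 0.
  apply: not_all_not_ex => commw1; apply: ncw1; apply/over_centerP => d.
  by apply/eqP; rewrite -subr_eq0; apply/negPn/negP; apply: commw1.
set v := _ - _ => v_neq0.
have svw : {subset msupp v <= msupp w}.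
  move=> m; rewrite mcoeff_msupp mcoeff_commC => vm; apply: sw1w.
  by rewrite mcoeff_msupp; apply: contraNneq vm => ->; rewrite mulr0 mul0r subrr.
have vm0 : m0 \notin msupp v.
  by rewrite mcoeff_msupp mcoeff_commC w1m0 mulr1 mul1r subrr eqxx.
have Gv : G v by apply: GB; apply: GM.
have [q [Gq cq q_neq0 sqv]] := IHw v (msupp_size_lt svw wm0 vm0) Gv v_neq0.
by exists q; split=> // m /sqv /svw.
Qed.

Lemma subring_span_central x : G x ->
  exists l : seq (D * {mpoly D[n]}),
    (forall dq, dq \in l -> G dq.2 /\ over_center dq.2) /\
    x = \sum_(dq <- l) dq.1%:MP * dq.2.
Proof.
elim/msupp_size_ind: x => x IHx Gx.
have [->|x_neq0] := eqVneq x 0; first by exists [::]; rewrite big_nil.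
have [q [Gq cq q_neq0 sqx]] := subring_central_elem Gx x_neq0.
have [m0 qm0] := exists_mem_msupp q_neq0.
pose d := x@_m0 / q@_m0; pose y := x - d%:MP * q.
have syx : {subset msupp y <= msupp x}.
  move=> m /msuppB_le; rewrite mem_cat => /orP[//|].
  by rewrite mul_mpolyC => /msuppZ_le /sqx.
have ym0 : m0 \notin msupp y.
  rewrite mcoeff_msupp mcoeffB mcoeffCM -mulrA mulVr ?mulr1 ?subrr ?eqxx //.
  by apply: divD; rewrite -mcoeff_msupp.
have Gy : G y by apply: GB => //; apply: GM.
have [l [Gl ey]] := IHx y (msupp_size_lt syx (sqx _ qm0) ym0) Gy.
exists ((d, q) :: l); split; first by move=> dq; rewrite in_cons => /predU1P[->|/Gl].
by rewrite big_cons -ey /y addrC subrK.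
Qed.

End SubringOverDivisionRing.

Section GeneratedSubring.
Variables (R : ringType) (n : nat).
Implicit Types (X Y : seq {mpoly R[n]}).

Lemma gen_subring_pred X : subring_pred (gen_subring X).
Proof.
split=> [S [] // | x y Gx Gy S subS SC SX | x y Gx Gy S subS SC SX].
- by apply: (subring_predB subS); [apply: Gx | apply: Gy].
- by apply: (subring_predM subS); [apply: Gx | apply: Gy].
Qed.

Lemma gen_subring_C X c : gen_subring X c%:MP.
Proof. by move=> S _ SC _. Qed.

Lemma gen_subring_mem X x : x \in X -> gen_subring X x.
Proof. by move=> Xx S _ _ SX; apply: SX. Qed.

Lemma gen_subring_sub X Y :
  (forall x, x \in X -> gen_subring Y x) -> forall q, gen_subring X q -> gen_subring Y q.
Proof. by move=> XY q Xq; apply: Xq; [apply: gen_subring_pred | apply: gen_subring_C |]. Qed.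

End GeneratedSubring.

Theorem lemma4p4 (D : unitRingType) (hdiv : is_division_ring D)
    (hfin : centrally_finite D) (n : nat) (p : {mpoly D[n]}) :
  exists ps : seq {mpoly D[n]},
    (forall q, q \in ps -> over_center q) /\
    (forall q, gen_subring [:: p] q <-> gen_subring ps q).
Proof.
have [l [Gl ep]] := subring_span_central hdiv (gen_subring_pred [:: p])
  (@gen_subring_C _ _ _) (gen_subring_mem (mem_head p [::])).
set ps := [seq dq.2 | dq <- l].
have ps_l dq : dq \in l -> gen_subring ps dq.2.
  by move=> ldq; apply: gen_subring_mem; apply: map_f.
exists ps; split; first by move=> q /mapP[dq /Gl[_ cq] ->].
move=> q; split; apply: gen_subring_sub => x; last by move=> /mapP[dq /Gl[Gq _] ->].
have GM := subring_predM (gen_subring_pred ps).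
rewrite inE => /eqP ->; rewrite ep; apply: (subring_pred_sum (gen_subring_pred ps)).
by move=> dq ldq; apply: GM (ps_l _ ldq); apply: gen_subring_C.
Qed.
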